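(* Let $t_1$, $\ell_1$, $t_2$, and $\ell_2$ be positive integers. If $\ell_1 < 2t_1$, then there are only finitely many matroids (up to isomorphism) with the $(t_1,\ell_1,t_2,\ell_2)$-property. The same is true if $\ell_2 < 2t_2$.
   Context: A matroid has the $(t_1,\ell_1,t_2,\ell_2)$-property if every $t_1$-element subset of its ground set is contained in an $\ell_1$-element circuit, and every $t_2$-element subset of its ground set is contained in an $\ell_2$-element cocircuit. *)

From mathcomp Require Import all_boot.
Set Implicit Arguments. Unset Strict Implicit. Unset Printing Implicit Defensive.

Record matroid (T : finType) := Matroid {
  indep : {set {set T}};
  indep_set0 : set0 \in indep;
  indep_sub : forall A B : {set T}, B \in indep -> A \subset B -> A \in indep;
  indep_aug : forall A B : {set T}, A \in indep -> B \in indep -> #|A| < #|B| ->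
    exists2 x, x \in B :\: A & x |: A \in indep
}.

Section MatroidNotions.
Variables (T : finType) (M : matroid T).

Definition is_basis (B : {set T}) : bool := maxset (mem (indep M)) B.

Definition is_circuit (C : {set T}) : bool := minset (fun D => D \notin indep M) C.

(* independent sets of the dual matroid M^* : sets avoiding some basis of M *)
Definition coindep (A : {set T}) : bool := [exists B, is_basis B && [disjoint A & B]].

Definition is_cocircuit (C : {set T}) : bool := minset (fun D => ~~ coindep D) C.

Definition tl_property (t1 l1 t2 l2 : nat) : Prop :=
  (forall X : {set T}, #|X| = t1 ->
     exists C : {set T}, [/\ is_circuit C, #|C| = l1 & X \subset C]) /\
  (forall X : {set T}, #|X| = t2 ->
     exists C : {set T}, [/\ is_cocircuit C, #|C| = l2 & X \subset C]).

End MatroidNotions.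

Definition matroid_iso (T1 T2 : finType) (M1 : matroid T1) (M2 : matroid T2) : Prop :=
  exists f : T1 -> T2, bijective f /\
    forall A : {set T1}, (A \in indep M1) = (f @: A \in indep M2).

Definition any_matroid := {T : finType & matroid T}.

(* A circuit never meets a cocircuit in exactly one element.  So if [t]
   pairwise disjoint cocircuits exist, a circuit through a [t]-set meeting all
   of them has at least [2 t] elements, which is impossible when [l1 < 2 t1].
   Such cocircuits exist in every large matroid with the property: the
   [l2]-element cocircuits cover the ground set, so a sunflower-type argument
   gives many of them that are pairwise disjoint outside a core [K] with
   [#|K| <= l2]; by submodularity of the dual rank, any [#|K| + 1] of them have
   a codependent union outside [K], which therefore contains a cocircuit.
   The argument only uses a submodular, monotone rank function bounded by
   cardinality, so it applies verbatim to the dual matroid and covers the case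
   [l2 < 2 t2].  Ground sets of bounded size carry finitely many matroids up to
   isomorphism. *)

From mathcomp Require Import all_boot zify.
From Stdlib Require List.
From Stdlib Require Import ClassicalEpsilon.
Set Implicit Arguments. Unset Strict Implicit. Unset Printing Implicit Defensive.

Section Rank.
Variables (T : finType) (M : matroid T).
Implicit Types X Y I J : {set T}.

Definition rk X := \max_(I | (I \in indep M) && (I \subset X)) #|I|.

Lemma rk_witness X : exists2 I, (I \in indep M) && (I \subset X) & #|I| = rk X.
Proof.
pose P I := (I \in indep M) && (I \subset X).
have P0 : P set0 by rewrite /P indep_set0 sub0set.
by rewrite /rk (bigmax_eq_arg (P := P) _ P0); case: arg_maxnP => // I PI _; exists I.
Qed.

Lemma indep_card_le_rk I X : I \in indep M -> I \subset X -> #|I| <= rk X.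
Proof.
move=> iI sIX.
by apply: (leq_bigmax_cond (P := fun I => (I \in indep M) && (I \subset X))); rewrite iI.
Qed.

Lemma rk_le_card X : rk X <= #|X|.
Proof. by apply/bigmax_leqP => I /andP[_]; apply: subset_leq_card. Qed.

Lemma rk_mono X Y : X \subset Y -> rk X <= rk Y.
Proof.
move=> sXY; have [I /andP[iI sIX] <-] := rk_witness X.
exact: indep_card_le_rk iI (subset_trans sIX sXY).
Qed.

Lemma notin_indep_rkE X : (X \notin indep M) = (rk X < #|X|).
Proof.
rewrite ltn_neqAle rk_le_card andbT; congr negb; apply/idP/eqP => [iX|].
  by apply/eqP; rewrite eqn_leq rk_le_card indep_card_le_rk.
have [I /andP[iI sIX] <-] := rk_witness X; move=> eIX.
suff -> : X = I by [].
by apply/eqP; rewrite eq_sym eqEcard sIX -eIX /=.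
Qed.

Lemma rk_maximal_indep X J :
  J \in indep M -> J \subset X ->
  (forall x, x \in X -> x |: J \in indep M -> x \in J) -> #|J| = rk X.
Proof.
move=> iJ sJX maxJ; apply/eqP; rewrite eqn_leq indep_card_le_rk //= leqNgt.
apply/negP => ltJ; have [I /andP[iI sIX] eI] := rk_witness X.
have [x /setDP[xI xJ] ixJ] := indep_aug iJ iI (leq_trans ltJ (eq_leq (esym eI))).
by rewrite maxJ ?(subsetP sIX) in xJ.
Qed.

Lemma rk_extend I X : I \in indep M -> I \subset X ->
  exists J, [/\ J \in indep M, I \subset J, J \subset X & #|J| = rk X].
Proof.
move=> iI sIX; pose P J := [&& J \in indep M, I \subset J & J \subset X].
have PI : P I by rewrite /P iI subxx sIX.
have [J maxJ _] := maxset_exists PI.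
have /and3P[iJ sIJ sJX] := maxsetp maxJ.
exists J; split=> //; apply: rk_maximal_indep => // x xX ixJ.
have PxJ : P (x |: J).
  by rewrite /P ixJ (subset_trans sIJ (subsetUr _ _)) subUset sub1set xX sJX.
by rewrite -(maxsetsup maxJ PxJ (subsetUr _ _)) setU11.
Qed.

Lemma rk_submod X Y : rk (X :|: Y) + rk (X :&: Y) <= rk X + rk Y.
Proof.
have [I /andP[iI sIXY] eI] := rk_witness (X :&: Y).
have sIU : I \subset X :|: Y.
  by apply: subset_trans sIXY (subset_trans (subsetIl X Y) (subsetUl X Y)).
have [J [iJ sIJ sJ <-]] := rk_extend iI sIU.
have rkJX : #|J :&: X| <= rk X.
  by apply: indep_card_le_rk (subsetIr _ _); apply: indep_sub iJ (subsetIl _ _).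
have rkJY : #|J :&: Y| <= rk Y.
  by apply: indep_card_le_rk (subsetIr _ _); apply: indep_sub iJ (subsetIl _ _).
have cardI : #|I| <= #|J :&: X :&: Y|.
  by apply: subset_leq_card; rewrite -setIA subsetI sIJ.
have cardJ : #|J :&: X| + #|J :&: Y| = #|J| + #|J :&: X :&: Y|.
  by rewrite -cardsUI -setIUr (setIidPl sJ) setIACA setIid setIA.
apply: leq_trans (leq_add rkJX rkJY); rewrite cardJ -eI leq_add2l //.
Qed.

Lemma rk_setU_card X Y : rk (X :|: Y) <= rk X + #|Y|.
Proof.
apply: leq_trans (leq_addr (rk (X :&: Y)) _) _.
by apply: leq_trans (rk_submod X Y) _; rewrite leq_add2l rk_le_card.
Qed.

Lemma basis_card B : is_basis M B -> #|B| = rk setT.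
Proof.
case/maxsetP => iB maxB; apply: rk_maximal_indep iB (subsetT _) _ => x _ ixB.
by rewrite -(maxB _ ixB (subsetUr _ _)) setU11.
Qed.

Lemma coindepE A : coindep M A = (rk (~: A) == rk setT).
Proof.
apply/existsP/eqP => [[B /andP[bB dAB]]|eA].
  apply/eqP; rewrite eqn_leq rk_mono ?subsetT //= -(basis_card bB).
  by apply: indep_card_le_rk (maxsetp bB) _; rewrite -disjoints_subset disjoint_sym.
have [J /andP[iJ sJ] eJ] := rk_witness (~: A).
exists J; rewrite disjoint_sym disjoints_subset sJ andbT.
apply/maxsetP; split=> // B iB sJB; apply/eqP; rewrite eq_sym eqEcard sJB /=.
by rewrite eJ eA indep_card_le_rk ?subsetT.
Qed.

Definition dual_rk X := #|X| + rk (~: X) - rk setT.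

Lemma rk_setT_le X : rk setT <= #|X| + rk (~: X).
Proof. by rewrite addnC -(setUCr (~: X)) setCK rk_setU_card. Qed.

Lemma notcoindep_dual_rkE X : (~~ coindep M X) = (dual_rk X < #|X|).
Proof.
rewrite coindepE /dual_rk eqn_leq rk_mono ?subsetT //=.
by have := rk_setT_le X; lia.
Qed.

Lemma dual_rk_le_card X : dual_rk X <= #|X|.
Proof. by rewrite /dual_rk; have := rk_mono (subsetT (~: X)); lia. Qed.

Lemma dual_rk_mono X Y : X \subset Y -> dual_rk X <= dual_rk Y.
Proof.
move=> sXY; have sCX : ~: X \subset ~: Y :|: (Y :\: X).
  by apply/subsetP => z; rewrite !inE; case: (z \in X); case: (z \in Y).
have := leq_trans (rk_mono sCX) (rk_setU_card _ _).
rewrite cardsDS // /dual_rk; have := rk_setT_le X; have := subset_leq_card sXY.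
lia.
Qed.

Lemma dual_rk_submod X Y :
  dual_rk (X :|: Y) + dual_rk (X :&: Y) <= dual_rk X + dual_rk Y.
Proof.
have := rk_submod (~: X) (~: Y); rewrite -setCI -setCU /dual_rk.
have := cardsUI X Y; have := rk_setT_le (X :|: Y); have := rk_setT_le (X :&: Y).
lia.
Qed.

End Rank.

Section WeakSunflower.
Variable T : finType.
Implicit Types (K : {set T}) (ss : seq {set T}).

Definition weak_sunflower K ss : Prop :=
  [/\ uniq ss, {in ss, forall S : {set T}, ~~ (S \subset K)} &
      {in ss &, forall S S' : {set T}, S != S' -> [disjoint S :\: K & S' :\: K]}].

Lemma weak_sunflower_sub K ss ss' :
  weak_sunflower K ss -> {subset ss' <= ss} -> uniq ss' -> weak_sunflower K ss'.
Proof.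
case=> _ nsub dis sub uss'; split=> // [S /sub | S S' /sub hS /sub hS'].
  exact: nsub.
exact: dis.
Qed.

Lemma weak_sunflower_cat K ss1 ss2 : weak_sunflower K (ss1 ++ ss2) ->
  [/\ weak_sunflower K ss1, weak_sunflower K ss2 &
      [disjoint (\bigcup_(S <- ss1) S) :\: K & (\bigcup_(S <- ss2) S) :\: K]].
Proof.
move=> w; have [+ _ dis] := w; rewrite cat_uniq => /and3P[u1 n12 u2].
split; [apply: weak_sunflower_sub w _ u1 | apply: weak_sunflower_sub w _ u2 |].
- by move=> S; rewrite mem_cat => ->.
- by move=> S; rewrite mem_cat orbC => ->.
rewrite !bigcup_seq -setI_eq0; apply/eqP/setP => x; rewrite !inE.
apply/negP => /andP[/andP[xK /bigcupP[S hS xS]] /andP[_ /bigcupP[S' hS' xS']]].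
have neSS' : S != S'.
  by apply/eqP => eSS'; move/hasPn: n12 => /(_ S' hS'); rewrite -eSS' hS.
have := dis S S'; rewrite !mem_cat hS hS' orbT => /(_ isT isT neSS') /disjointFr.
by move=> /(_ x); rewrite !inE xK xS xS' => /(_ isT).
Qed.

Lemma card_bigcup_le (I : finType) (P : pred I) (F : I -> {set T}) :
  #|\bigcup_(i | P i) F i| <= \sum_(i | P i) #|F i|.
Proof.
elim/big_rec2: _ => [|i n U _ le]; first by rewrite cards0.
by rewrite (leq_trans (leq_card_setU _ _).1) ?leq_add2l.
Qed.

Lemma bigcup_pigeonhole (I : finType) (A : {pred I}) (F : I -> {set T}) m :
  #|A| * m < #|\bigcup_(i in A) F i| -> exists2 i, i \in A & m < #|F i|.
Proof.
move=> big; apply/exists_inP; apply: contraTT big => /exists_inP small.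
rewrite -leqNgt -sum_nat_const.
apply: leq_trans (card_bigcup_le (fun i => i \in A) F) _; apply: leq_sum => i iA.
by rewrite leqNgt; apply/negP => ltm; apply: small; exists i.
Qed.

Lemma maximal_weak_sunflower (F : {set {set T}}) K :
  exists G : {set {set T}}, [/\ G \subset F, weak_sunflower K (enum G) &
    forall S, S \in F -> ~~ (S \subset K) ->
      ~~ [disjoint S :\: K & \bigcup_(S' in G) (S' :\: K)]].
Proof.
pose Q (G : {set {set T}}) := [&& G \subset F, [forall S in G, ~~ (S \subset K)] &
  [forall S in G, forall S' in G, (S != S') ==> [disjoint S :\: K & S' :\: K]]].
have Q0 : Q set0.
  by rewrite /Q sub0set /=; apply/andP; split; apply/forall_inP => S; rewrite inE.
have [G maxG _] := maxset_exists Q0.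
have /and3P[sGF /forall_inP nsubG /forall_inP disG] := maxsetp maxG.
exists G; split=> // [|S SF nsubS].
  split=> [|S|S S']; rewrite ?enum_uniq // !mem_enum; first exact: nsubG.
  by move=> /disG /forall_inP dS /dS /implyP.
apply/negP => disS.
have QSG : Q (S |: G).
  rewrite /Q subUset sub1set SF sGF /=; apply/andP; split.
    by apply/forall_inP => S1 /setU1P[->|/nsubG].
  apply/forall_inP => S1 hS1; apply/forall_inP => S2 hS2.
  have disSG S' : S' \in G -> [disjoint S :\: K & S' :\: K].
    by move=> hS'; apply: disjointWr disS; apply: (bigcup_sup S').
  case/setU1P: hS1 => [-> | hS1]; case/setU1P: hS2 => [-> | hS2]; apply/implyP => ne12.
  - by rewrite eqxx in ne12.
  - exact: disSG.
  - by rewrite disjoint_sym; apply: disSG.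
  - by have /forall_inP /(_ S2 hS2) /implyP := disG S1 hS1; apply.
have SG : S \in G by rewrite -(maxsetsup maxG QSG (subsetUr _ _)) setU11.
have /disjointWr /(_ disS) : S :\: K \subset \bigcup_(S' in G) (S' :\: K).
  exact: (bigcup_sup S SG).
by rewrite -setI_eq0 setIid setD_eq0 (negbTE nsubS).
Qed.

Lemma bigcup_petals_cover (F G : {set {set T}}) K :
  (forall S, S \in F -> ~~ (S \subset K) ->
     ~~ [disjoint S :\: K & \bigcup_(S' in G) (S' :\: K)]) ->
  \bigcup_(S in F) (S :\: K) \subset
    \bigcup_(a in \bigcup_(S in G) (S :\: K)) \bigcup_(S in F | a \in S) (S :\: K).
Proof.
move=> meetG; apply/subsetP => x /bigcupP[S SF xS].
have nsubS : ~~ (S \subset K).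
  by apply: (contraL _ xS); rewrite -setD_eq0 => /eqP ->; rewrite inE.
have := meetG S SF nsubS; rewrite -setI_eq0 => /set0Pn[a /setIP[aS aG]].
apply/bigcupP; exists a => //; apply/bigcupP; exists S => //.
by rewrite SF; case/setDP: aS.
Qed.

Fixpoint sunflower_bound (p s : nat) : nat :=
  if s is s'.+1 then (p - 1) * s * (sunflower_bound p s' + 1) else 0.

(* A weak form of the Erdős–Rado sunflower lemma: a maximal weak sunflower with
   core [K0] is either large, or its petals form a small set [A] that every
   member of [F] meets outside [K0]; then some point [a] of [A] lies in many
   members of [F], and we recurse on them with core [a |: K0]. *)
Lemma weak_sunflower_exists p s (F : {set {set T}}) K0 :
  (forall S, S \in F -> #|S :\: K0| <= s) ->
  sunflower_bound p s < #|\bigcup_(S in F) (S :\: K0)| ->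
  exists K ss,
    [/\ #|K| <= #|K0| + s, size ss = p, {subset ss <= F} & weak_sunflower K ss].
Proof.
elim: s F K0 => [|s IH] F K0 small big.
  have big0 : #|F| * 0 < #|\bigcup_(S in F) (S :\: K0)| by rewrite muln0.
  have [S SF] := bigcup_pigeonhole big0.
  by rewrite ltnNge small.
have [G [sGF wG maxG]] := maximal_weak_sunflower F K0.
have [pG | Gp] := leqP p #|G|.
  exists K0, (take p (enum G)); split; first exact: leq_addr.
  - by rewrite size_takel // -cardE.
  - by move=> S /mem_take; rewrite mem_enum => /(subsetP sGF).
  by apply: weak_sunflower_sub wG (mem_take (s := _)) (take_uniq _ (enum_uniq _)).
set A := \bigcup_(S in G) (S :\: K0).
have cardA : #|A| <= (p - 1) * s.+1.
  apply: leq_trans (card_bigcup_le (fun S => S \in G) _) _.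
  apply: leq_trans (leq_sum _ (fun S SG => small S (subsetP sGF S SG))) _.
  by rewrite sum_nat_const leq_mul2r; apply/orP; right; lia.
pose U a := \bigcup_(S in F | a \in S) (S :\: K0).
have cover := bigcup_petals_cover maxG.
have [a aA bigU] : exists2 a, a \in A & sunflower_bound p s + 1 < #|U a|.
  apply: bigcup_pigeonhole; apply: leq_trans (subset_leq_card cover).
  apply: leq_trans big; rewrite ltnS /= [_ * _ * _]mulnC [_ * (_ * _)]mulnC.
  by rewrite leq_mul2r cardA orbT.
have aK0 : a \notin K0 by case/bigcupP: aA => S _ /setDP[].
pose F' := [set S in F | a \in S].
have small' S : S \in F' -> #|S :\: (a |: K0)| <= s.
  rewrite inE => /andP[SF aS]; move: (small S SF).
  by rewrite (cardsD1 a) !inE aS aK0 setDDl (setUC K0) add1n ltnS.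
have big' : sunflower_bound p s < #|\bigcup_(S in F') (S :\: (a |: K0))|.
  have sub : U a :\ a \subset \bigcup_(S in F') (S :\: (a |: K0)).
    apply/subsetP => y /setD1P[ya /bigcupP[S /andP[SF aS] yS]].
    apply/bigcupP; exists S; first by rewrite inE SF.
    by move: yS; rewrite !inE negb_or ya.
  apply: leq_trans (subset_leq_card sub); move: bigU.
  by rewrite (cardsD1 a (U a)); case: (a \in U a); lia.
have [K [ss [cardK size_ss sF' wss]]] := IH F' (a |: K0) small' big'.
exists K, ss; split=> //.
  by apply: leq_trans cardK _; rewrite cardsU1 aK0 addnS.
by move=> S /sF'; rewrite inE => /andP[].
Qed.

End WeakSunflower.

Section DisjointFamilies.
Variable T : finType.
Implicit Types (C X : {set T}) (Ds : seq {set T}).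

Lemma exists_card_set (x : T) n : 0 < n <= #|T| -> exists X, x \in X /\ #|X| = n.
Proof.
case/andP => n_gt0 nT; have : n.-1 <= #|[set~ x]| by rewrite cardsC1; lia.
case/card_geqP => s [us size_s sub].
exists (x |: [set y in s]); split; first exact: setU11.
have xs : x \notin [set y in s] by rewrite inE; apply/negP => /sub; rewrite !inE eqxx.
by rewrite cardsU1 xs cardsE /= (card_uniqP us) size_s; lia.
Qed.

Lemma disjoint_transversal Ds :
  pairwise (fun A B : {set T} => [disjoint A & B]) Ds -> all (fun D => D != set0) Ds ->
  exists X, [/\ #|X| = size Ds, X \subset \bigcup_(D <- Ds) D &
                {in Ds, forall D : {set T}, ~~ [disjoint X & D]}].
Proof.
elim: Ds => [|D Ds IH] /=; first by exists set0; rewrite cards0 big_nil sub0set.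
case/andP=> disD /IH{}IH /andP[/set0Pn[x xD] /IH[X [cardX sX meetX]]].
have xX : x \notin X.
  apply: contraL xD => /(subsetP sX); rewrite bigcup_seq => /bigcupP[D' hD' xD'].
  by move/allP: disD => /(_ D' hD') /disjointFl ->.
exists (x |: X); split; first by rewrite cardsU1 xX cardX.
  by rewrite big_cons setUSS // sub1set.
move=> D'; rewrite inE => /predU1P[-> | hD'].
  by rewrite -setI_eq0; apply/set0Pn; exists x; rewrite !inE eqxx.
by apply: contraNN (meetX D' hD'); apply: disjointWl (subsetUr _ _).
Qed.

Lemma card_ge_mul_size C n Ds :
  pairwise (fun A B : {set T} => [disjoint A & B]) Ds ->
  {in Ds, forall D : {set T}, n <= #|C :&: D|} -> n * size Ds <= #|C|.
Proof.
elim: Ds C => [|D Ds IH] C /=; first by rewrite muln0.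
case/andP=> disD pDs meetC; rewrite mulnS -(cardsID D C).
apply: leq_add; first by apply: meetC; rewrite mem_head.
apply: IH pDs _ => D' hD'; rewrite setIDAC.
move/allP: disD => /(_ D' hD') disDD'.
rewrite (setDidPl _); first by apply: meetC; rewrite inE hD' orbT.
by apply: disjointWl (subsetIr _ _) _; rewrite disjoint_sym.
Qed.

End DisjointFamilies.

Section RankFunction.
Variables (T : finType) (rho : {set T} -> nat).
Implicit Types (B C K X Y : {set T}) (ss : seq {set T}).
Hypothesis rho_le_card : forall X, rho X <= #|X|.
Hypothesis rho_mono : forall X Y, X \subset Y -> rho X <= rho Y.
Hypothesis rho_submod : forall X Y, rho (X :|: Y) + rho (X :&: Y) <= rho X + rho Y.

Definition rcircuit C := minset (fun D => rho D < #|D|) C.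

Lemma rcircuit_lt C : rcircuit C -> rho C < #|C|.
Proof. exact: minsetp. Qed.

Lemma rcircuit_proper C B : rcircuit C -> B \proper C -> rho B = #|B|.
Proof.
move=> cC pBC; apply/eqP; rewrite eqn_leq rho_le_card leqNgt; apply/negP => ltB.
by move: (pBC); rewrite {1}(minsetinf cC ltB (proper_sub pBC)) properxx.
Qed.

Lemma rcircuit_neq0 C : rcircuit C -> C != set0.
Proof.
by move/rcircuit_lt; apply: contraTneq => ->; rewrite cards0 ltn0.
Qed.

Lemma weak_sunflower_rcircuit_rank K ss :
  weak_sunflower K ss -> all rcircuit ss ->
  rho (\bigcup_(S <- ss) S) + size ss <= #|\bigcup_(S <- ss) S|.
Proof.
elim: ss => [|S ss IH] /=; first by rewrite big_nil addn0 rho_le_card.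
move=> w /andP[cS css]; have [wS wss dis] := weak_sunflower_cat (ss1 := [:: S]) w.
have [_ nsubS _] := wS; have {}nsubS := nsubS S (mem_head _ _).
rewrite big_seq1 in dis; rewrite big_cons; set U := \bigcup_(S' <- ss) S' in dis *.
have pSU : S :&: U \proper S.
  rewrite properEneq subsetIl andbT; apply: contraNneq nsubS => <-.
  apply/subsetP => x /setIP[xS xU]; apply: contraT => xK.
  have /(disjointFr dis) : x \in S :\: K by rewrite inE xK xS.
  by rewrite inE xK xU.
have := rho_submod S U; rewrite (rcircuit_proper cS pSU).
have IHU : rho U + size ss <= #|U| := IH wss css.
have := rcircuit_lt cS; have := cardsUI S U; lia.
Qed.

Lemma weak_sunflower_rcircuit_sub K ss :
  weak_sunflower K ss -> all rcircuit ss -> #|K| < size ss ->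
  exists2 C, rcircuit C & C \subset (\bigcup_(S <- ss) S) :\: K.
Proof.
move=> w css ltK; set U := \bigcup_(S <- ss) S.
have dep : rho (U :\: K) < #|U :\: K|.
  have rkU : rho U + size ss <= #|U| := weak_sunflower_rcircuit_rank w css.
  have := rho_mono (subsetDl U K).
  have := cardsID K U; have := subset_leq_card (subsetIr U K); lia.
by have [C] := @minset_exists _ (fun D => rho D < #|D|) _ dep; exists C.
Qed.

(* Groups of [#|K|.+1] consecutive members of the sunflower have pairwise
   disjoint unions outside [K], and each of them contains a circuit there. *)
Lemma weak_sunflower_disjoint_rcircuits K j ss :
  weak_sunflower K ss -> all rcircuit ss -> j * #|K|.+1 <= size ss ->
  exists Ds, [/\ size Ds = j, all rcircuit Ds,
    pairwise (fun A B : {set T} => [disjoint A & B]) Ds &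
    {in Ds, forall D : {set T}, D \subset (\bigcup_(S <- ss) S) :\: K}].
Proof.
elim: j ss => [|j IH] ss w css sizess; first by exists [::].
rewrite -(cat_take_drop #|K|.+1 ss) in w css *; rewrite all_cat in css.
case/andP: css => css1 css2; have [w1 w2 dis] := weak_sunflower_cat w.
have le_size : #|K|.+1 <= size ss by apply: leq_trans sizess; rewrite leq_pmull.
have ltK : #|K| < size (take #|K|.+1 ss) by rewrite size_takel.
have [D cD sD] := weak_sunflower_rcircuit_sub w1 css1 ltK.
have [|Ds [sizeDs cDs dDs sDs]] := IH _ w2 css2.
  by rewrite size_drop; move: sizess; rewrite mulSn; lia.
exists (D :: Ds); split=> /=; rewrite ?sizeDs ?cD ?cDs ?dDs ?andbT //.
  by apply/allP => D' /sDs sD'; apply: disjointWl sD (disjointWr sD' dis).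
move=> D'; rewrite big_cat inE => /predU1P[-> | /sDs sD'].
  by apply: subset_trans sD (setSD _ (subsetUl _ _)).
by apply: subset_trans sD' (setSD _ (subsetUr _ _)).
Qed.

(* If every [t']-set lies in an [l']-circuit, the circuits of size [l'] cover
   the ground set; a huge ground set then yields a weak sunflower with [t]
   disjoint circuits inside it.  A [t]-set meeting all of them lies in some
   [C] in [Q], which meets each of them in at least two elements. *)
Lemma card_ground_le (Q : pred {set T}) t l t' l' :
  0 < t' -> l < 2 * t ->
  (forall C D, Q C -> rcircuit D -> #|C :&: D| != 1) ->
  (forall X, #|X| = t -> exists C, [/\ Q C, #|C| = l & X \subset C]) ->
  (forall X, #|X| = t' -> exists D, [/\ rcircuit D, #|D| = l' & X \subset D]) ->
  #|T| <= t' + sunflower_bound (t * l'.+1) l'.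
Proof.
move=> t'_gt0 ltl orthQ inQ inR; rewrite leqNgt; apply/negP => bigT.
pose F := [set D | rcircuit D & #|D| == l'].
have smallF D : D \in F -> #|D :\: set0| <= l'.
  by rewrite inE setD0 => /andP[_ /eqP ->].
have coverF : \bigcup_(D in F) (D :\: set0) = setT.
  have t'T : 0 < t' <= #|T| by rewrite t'_gt0; lia.
  apply/setP => x; rewrite inE; have [X [xX cardX]] := exists_card_set x t'T.
  have [D [cD cardD sXD]] := inR X cardX; apply/bigcupP; exists D.
    by rewrite inE cD cardD eqxx.
  by rewrite setD0 (subsetP sXD).
have [|K [ss [cardK size_ss sF wss]]] := weak_sunflower_exists (p := t * l'.+1) smallF.
  by rewrite coverF cardsT; lia.
have css : all rcircuit ss by apply/allP => S /sF; rewrite inE => /andP[].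
have [|Ds [sizeDs cDs dDs _]] := weak_sunflower_disjoint_rcircuits (j := t) wss css.
  by rewrite size_ss leq_mul2l; rewrite cards0 in cardK; rewrite ltnS cardK orbT.
have [|X [cardX _ meetX]] := disjoint_transversal dDs.
  by apply/allP => D /(allP cDs) /rcircuit_neq0.
have [|C [QC cardC sXC]] := inQ X; first by rewrite cardX.
suff : 2 * t <= #|C| by rewrite cardC leqNgt ltl.
rewrite -sizeDs; apply: card_ge_mul_size dDs _ => D hD.
have cD := allP cDs D hD; have := orthQ C D QC cD.
have : 0 < #|C :&: D|.
  have := meetX D hD; rewrite -setI_eq0 => /set0Pn[x /setIP[xX xD]].
  by apply/card_gt0P; exists x; rewrite inE xD (subsetP sXC).
lia.
Qed.

End RankFunction.

Section CircuitsAndCocircuits.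
Variables (T : finType) (M : matroid T).

Lemma is_circuitE C : is_circuit M C = rcircuit (rk M) C.
Proof. by apply: minset_eq => D; rewrite /= notin_indep_rkE. Qed.

Lemma is_cocircuitE D : is_cocircuit M D = rcircuit (dual_rk M) D.
Proof. by apply: minset_eq => X; rewrite /= notcoindep_dual_rkE. Qed.

(* The rank inequality behind it: with [C :&: D = [set x]], submodularity on
   [C] and [~: D] gives [rk setT <= rk (~: D)], so [D] would be coindependent. *)
Lemma circuit_cocircuit_meet C D :
  is_circuit M C -> is_cocircuit M D -> #|C :&: D| != 1.
Proof.
rewrite is_circuitE is_cocircuitE => cC cD; apply/negP => /cards1P[x eCD].
have xCD : x \in C :&: D by rewrite eCD set11.
have /setIP[xC xD] := xCD.
have rkCx := rcircuit_proper (rk_le_card M) cC (properD1 xC).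
have drkDx := rcircuit_proper (dual_rk_le_card M) cD (properD1 xD).
have inCD y : (y \in C) && (y \in D) = (y == x) by rewrite -in_setI eCD inE.
have eU : C :|: ~: D = ~: (D :\ x).
  apply/setP => y; have := inCD y; rewrite !inE.
  by case: (y == x); case: (y \in C); case: (y \in D).
have eI : C :&: ~: D = C :\ x.
  apply/setP => y; have := inCD y; rewrite !inE.
  by case: (y == x); case: (y \in C); case: (y \in D).
have := rk_submod M C (~: D); rewrite eU eI.
have := rcircuit_lt cC; have := rcircuit_lt cD; rewrite /dual_rk in drkDx *.
have := rk_mono M (subsetT (~: (D :\ x))); have := rk_setT_le M (D :\ x).
rewrite (cardsD1 x C) (cardsD1 x D) xC xD /= in rkCx drkDx *; lia.
Qed.

End CircuitsAndCocircuits.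

Section Relabel.
Variables (T T' : finType) (M : matroid T) (f : T -> T') (g : T' -> T).
Hypotheses (fK : cancel f g) (gK : cancel g f).

Let f_inj : injective f := can_inj fK.

Definition relabel_indep : {set {set T'}} := [set f @: A | A : {set T} in indep M].

Lemma mem_relabel_indep (A : {set T}) : (f @: A \in relabel_indep) = (A \in indep M).
Proof.
apply/imsetP/idP => [[B iB /(imset_inj f_inj) ->] // | iA].
by exists A.
Qed.

Lemma imset_cancel (A' : {set T'}) : f @: (g @: A') = A'.
Proof. by rewrite -imset_comp (eq_imset _ gK) imset_id. Qed.

Lemma relabel_indep_set0 : set0 \in relabel_indep.
Proof. by rewrite -(imset0 f) mem_relabel_indep indep_set0. Qed.

Lemma relabel_indep_sub (A B : {set T'}) :
  B \in relabel_indep -> A \subset B -> A \in relabel_indep.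
Proof.
move=> iB sAB; rewrite -(imset_cancel A) mem_relabel_indep.
rewrite -(imset_cancel B) mem_relabel_indep in iB.
exact: indep_sub iB (imsetS g sAB).
Qed.

Lemma relabel_indep_aug (A B : {set T'}) :
  A \in relabel_indep -> B \in relabel_indep -> #|A| < #|B| ->
  exists2 x, x \in B :\: A & x |: A \in relabel_indep.
Proof.
rewrite -(imset_cancel A) -(imset_cancel B) !mem_relabel_indep.
rewrite !(card_imset _ f_inj) => iA iB ltAB.
have [x /setDP[xB xA] ixA] := indep_aug iA iB ltAB.
exists (f x); first by rewrite inE !(mem_imset _ _ f_inj) xB xA.
by rewrite -imsetU1 mem_relabel_indep.
Qed.

Definition relabel : matroid T' :=
  Matroid relabel_indep_set0 relabel_indep_sub relabel_indep_aug.

Lemma matroid_iso_relabel : matroid_iso M relabel.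
Proof.
exists f; split; first by exists g.
by move=> A; rewrite /= mem_relabel_indep.
Qed.

End Relabel.

Lemma matroid_iso_indep_eq (T T' : finType) (M : matroid T) (N N' : matroid T') :
  matroid_iso M N -> indep N = indep N' -> matroid_iso M N'.
Proof. by move=> [f [bf eqf]] eN; exists f; split=> // A; rewrite eqf eN. Qed.

Definition matroid_of_indep n (S : {set {set 'I_n}}) : option (matroid 'I_n) :=
  match excluded_middle_informative (exists N : matroid 'I_n, indep N = S) with
  | left exN => Some (proj1_sig (constructive_indefinite_description _ exN))
  | right _ => None
  end.

Lemma matroid_of_indepP n (N : matroid 'I_n) :
  exists2 N', matroid_of_indep (indep N) = Some N' & indep N' = indep N.
Proof.
rewrite /matroid_of_indep; case: excluded_middle_informative => [exN|[]].
  by eexists; [reflexivity | case: constructive_indefinite_description].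
by exists N.
Qed.

Definition matroids_on_ord n : list any_matroid :=
  List.flat_map
    (fun S => if matroid_of_indep S is Some N then [:: existT _ _ N] else [::])
    (enum [set: {set {set 'I_n}}]).

Definition small_matroids (b : nat) : list any_matroid :=
  List.flat_map matroids_on_ord (iota 0 b.+1).

Lemma In_of_mem (U : eqType) (x : U) (s : seq U) : x \in s -> List.In x s.
Proof. by elim: s => //= y s IH; rewrite inE => /predU1P[->|/IH]; [left | right]. Qed.

Lemma small_matroids_complete b (T : finType) (M : matroid T) : #|T| <= b ->
  exists2 N, List.In N (small_matroids b) & matroid_iso M (projT2 N).
Proof.
move=> Tb; pose M0 := relabel M (@enum_rankK T) (@enum_valK T).
have [N eN indepN] := matroid_of_indepP M0.
exists (existT _ _ N).
  apply/List.in_flat_map; exists #|T|; split.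
    by apply: In_of_mem; rewrite mem_iota add0n ltnS.
  apply/List.in_flat_map; exists (indep M0); split; last by rewrite eN; left.
  by apply: In_of_mem; rewrite mem_enum in_setT.
exact: matroid_iso_indep_eq (matroid_iso_relabel _ _ _) (esym indepN).
Qed.

Unset Implicit Arguments.

Theorem theorem3p3 (t1 l1 t2 l2 : nat) :
  0 < t1 -> 0 < l1 -> 0 < t2 -> 0 < l2 ->
  (l1 < 2 * t1) \/ (l2 < 2 * t2) ->
  exists ms : seq any_matroid,
    forall (T : finType) (M : matroid T), tl_property M t1 l1 t2 l2 ->
      exists2 N, List.In N ms & matroid_iso M (projT2 N).
Proof.
move=> t1_gt0 _ t2_gt0 _ ltl.
pose b1 := t2 + sunflower_bound (t1 * l2.+1) l2.
pose b2 := t1 + sunflower_bound (t2 * l1.+1) l1.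
exists (small_matroids (b1 + b2)) => T M [inC inD].
apply: small_matroids_complete; case: ltl => ltl.
- apply: leq_trans _ (leq_addr b2 b1).
  apply: (card_ground_le (dual_rk_le_card M) (dual_rk_mono M) (dual_rk_submod M)
            (Q := is_circuit M) (l := l1)) => //.
    by move=> C D cC; rewrite -is_cocircuitE; apply: circuit_cocircuit_meet.
  by move=> X /inD[D [cD cardD sXD]]; exists D; rewrite -is_cocircuitE.
- apply: leq_trans _ (leq_addl b1 b2).
  apply: (card_ground_le (rk_le_card M) (rk_mono M) (rk_submod M)
            (Q := is_cocircuit M) (l := l2)) => //.
    move=> D C cD; rewrite -is_circuitE setIC => cC.
    exact: circuit_cocircuit_meet cC cD.
  by move=> X /inC[C [cC cardC sXC]]; exists C; rewrite -is_circuitE.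
Qed.
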